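(* Fix a total number $N_{\text{total}} > 0$ of collected data samples, split into $N_{\text{total}}/E_L$ episodes each of fixed length $E_L \in \{1,2,\dots\}$. Let $P_s(l)$ be the probability that the state at interaction step $l$ of an episode is secure (independent of $E_L$), let $N_s(E_L) = \frac{N_{\text{total}}}{E_L}\sum_{l=1}^{E_L} P_s(l)$ be the expected number of secure state visits over all episodes, $N_d(E_L) = N_{\text{total}} - N_s(E_L)$ the expected number of dead-end state visits, and $P_d(E_L) = N_d(E_L)/N_{\text{total}}$ the probability of visiting dead-end states. Then reducing $E_L$ causes $P_d$ to decrease or remain unchanged: $P_d(E_L) \le P_d(E_L+1)$ for every $E_L \ge 1$.
   Context: A dead-end state is a state from which, once reached at some step of a trajectory, no policy can lead to the goal state at any later step; a secure state is a state that is not a dead-end state. The dead-end set is absorbing along trajectories, so that $P_s(l) = \prod_{k=1}^{l}(1-P_d(k))$ with per-step dead-end probabilities $P_d(k)\in[0,1]$; in particular $P_s$ is non-increasing in $l$. *)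

From mathcomp Require Import all_boot all_order all_algebra.
Set Implicit Arguments. Unset Strict Implicit. Unset Printing Implicit Defensive.
Import Order.TTheory GRing.Theory Num.Theory.
Local Open Scope ring_scope.

(* Per-step dead-end probabilities pd : nat -> R (step k >= 1).
   Probability that the state at step l of an episode is secure:
   P_s(l) = prod_{k=1}^{l} (1 - P_d(k)). *)
Definition Ps {R : realFieldType} (pd : nat -> R) (l : nat) : R :=
  \prod_(1 <= k < l.+1) (1 - pd k).

Definition Ns {R : realFieldType} (Ntotal : R) (pd : nat -> R) (EL : nat) : R :=
  Ntotal / EL%:R * \sum_(1 <= l < EL.+1) Ps pd l.

Definition Nd {R : realFieldType} (Ntotal : R) (pd : nat -> R) (EL : nat) : R :=
  Ntotal - Ns Ntotal pd EL.

Definition Pd_visit {R : realFieldType} (Ntotal : R) (pd : nat -> R) (EL : nat) : R :=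
  Nd Ntotal pd EL / Ntotal.

From mathcomp Require Import all_boot all_order all_algebra.
From mathcomp Require Import lra.
Set Implicit Arguments. Unset Strict Implicit. Unset Printing Implicit Defensive.
Import Order.TTheory GRing.Theory Num.Theory.
Local Open Scope ring_scope.

(* [Pd_visit] is one minus the running mean of the secure-state probabilities
   [Ps], and [Ps], a product of more and more factors in [0, 1], is
   non-increasing.  The
   running mean of a non-increasing sequence is itself non-increasing: appending
   a term no larger than every previous one cannot raise the mean. *)

Section RunningMean.

Variable R : realFieldType.

Definition running_mean (u : nat -> R) (n : nat) : R :=
  (\sum_(1 <= l < n.+1) u l) / n%:R.

Lemma running_mean_nonincreasing (u : nat -> R) (n : nat) :
  {homo u : i j / (i <= j)%N >-> j <= i} -> (1 <= n)%N ->
  running_mean u n.+1 <= running_mean u n.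
Proof.
move=> u_noninc n_gt0; rewrite /running_mean big_nat_recr //=.
set S := \sum_(1 <= l < n.+1) u l.
have last_le_sum : n%:R * u n.+1 <= S.
  have -> : n%:R * u n.+1 = \sum_(1 <= l < n.+1) u n.+1.
    by rewrite sumr_const_nat subn1 mulr_natl.
  by apply: ler_sum_nat => i /andP[_ lt_in]; apply/u_noninc/ltnW.
rewrite ler_pdivrMr ?ltr0n // mulrAC ler_pdivlMr ?ltr0n // mulrSr.
lra.
Qed.

End RunningMean.

Section SecureProbability.

Variables (R : realFieldType) (pd : nat -> R).
Hypothesis pd_prob : forall k, 0 <= pd k <= 1.

Lemma PsS l : Ps pd l.+1 = Ps pd l * (1 - pd l.+1).
Proof. by rewrite /Ps big_nat_recr. Qed.

Lemma Ps_ge0 l : 0 <= Ps pd l.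
Proof.
by apply: prodr_ge0 => k _; have /andP[_ pd_le1] := pd_prob k; rewrite subr_ge0.
Qed.

Lemma Ps_nonincreasing : {homo Ps pd : l m / (l <= m)%N >-> m <= l}.
Proof.
move=> l; elim=> [|m IHm]; first by rewrite leqn0 => /eqP ->.
rewrite leq_eqVlt => /orP[/eqP -> //|]; rewrite ltnS => le_lm.
apply: le_trans (IHm le_lm); rewrite PsS -[leRHS]mulr1 ler_wpM2l ?Ps_ge0 //.
by have /andP[pd_ge0 _] := pd_prob m.+1; rewrite lerBlDr lerDl.
Qed.

End SecureProbability.

Lemma Pd_visitE (R : realFieldType) (Ntotal : R) (pd : nat -> R) (EL : nat) :
  Ntotal != 0 -> Pd_visit Ntotal pd EL = 1 - running_mean (Ps pd) EL.
Proof.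
move=> N_neq0; rewrite /Pd_visit /Nd /Ns /running_mean.
by rewrite mulrBl divff // mulrAC [Ntotal / _ / _]mulrAC divff // mul1r mulrC.
Qed.

Theorem corollary1 (R : realFieldType) (Ntotal : R) (pd : nat -> R)
  (hN : 0 < Ntotal) (hpd : forall k : nat, 0 <= pd k <= 1)
  (EL : nat) (hEL : (1 <= EL)%N) :
  Pd_visit Ntotal pd EL <= Pd_visit Ntotal pd EL.+1.
Proof.
rewrite !Pd_visitE ?gt_eqF // lerD2l lerN2.
exact: running_mean_nonincreasing (Ps_nonincreasing hpd) hEL.
Qed.
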